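(* Let $S$ be a commutative unital ring of positive characteristic, and let $\ell\in S$ satisfy: (i) $\ell-1$ is regular; (ii) for all positive integers $m,n$, $(\ell^m-1)\mid(\ell^n-1)$ in $S$ if and only if $m\mid n$ (in particular all positive powers of $\ell$ are distinct); (iii) $0_S$ is the only multiple of $\ell-1$ in the set $\{n\cdot 1_S: n\in\mathbb{Z}\}$. Then for every $y\in S$: (a) $y\in\operatorname{MPOW}(\ell)$ if and only if $y\in\operatorname{POW}(\ell)$ and $(\ell-1)^2\mid (y-1)$; (b) if moreover $\operatorname{char}(S)$ is a prime number, then $y\in\operatorname{PPOW}(\ell)$ if and only if $y\in\operatorname{MPOW}(\ell)$ and, for every $y'\in\operatorname{POW}(\ell)$ with $y'\neq\ell$ and $(y'-1)\mid(y-1)$, we have $y'\in\operatorname{MPOW}(\ell)$.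
   Context: An element $a\in S$ is regular if $ab=ac$ implies $b=c$. $\operatorname{POW}(\ell)=\{\ell^n:n\ge1\}$. When $\operatorname{char}(S)=c>0$: $\operatorname{MPOW}(\ell)$ is the set of powers $\ell^n$ with $n$ a positive multiple of $c$, and $\operatorname{PPOW}(\ell)$ is the set of powers $\ell^{n}$ with $n=c^k$ for some integer $k\ge1$. *)

From HB Require Import structures.
From mathcomp Require Import all_boot all_order all_algebra.
Set Implicit Arguments. Unset Strict Implicit. Unset Printing Implicit Defensive.
Import Order.TTheory GRing.Theory Num.Theory.
Local Open Scope ring_scope.

Definition dvdS (S : comNzRingType) (a b : S) : Prop := exists x : S, b = a * x.

Definition regularS (S : comNzRingType) (a : S) : Prop :=
  forall b c : S, a * b = a * c -> b = c.

Definition has_pos_char (S : comNzRingType) (c : nat) : Prop :=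
  (0 < c)%N /\ (c%:R : S) = 0 /\ (forall k : nat, (0 < k)%N -> (k%:R : S) = 0 -> (c <= k)%N).

Definition POW (S : comNzRingType) (l y : S) : Prop :=
  exists n : nat, (0 < n)%N /\ y = l ^+ n.

Definition MPOW (S : comNzRingType) (c : nat) (l y : S) : Prop :=
  exists n : nat, (0 < n)%N /\ (c %| n)%N /\ y = l ^+ n.

Definition PPOW (S : comNzRingType) (c : nat) (l y : S) : Prop :=
  exists k : nat, (1 <= k)%N /\ y = l ^+ (c ^ k).

From HB Require Import structures.
From mathcomp Require Import all_boot all_order all_algebra.
From mathcomp Require Import ring.
Import Order.TTheory GRing.Theory Num.Theory.
Local Open Scope ring_scope.

(* Write u = l - 1.  For every n the binomial expansion gives
   l^n - 1 = u * (n + u * q) for some q, so modulo u^2 the element l^n - 1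
   is u * n.  Since u is regular and the only multiple of u among the
   integers is 0, u^2 divides l^n - 1 exactly when n = 0 in S, i.e. when
   char S divides n; this is part (a).
   By hypothesis (ii), l^m - 1 | l^n - 1 iff m | n, and the powers of l are
   pairwise distinct; hence for y = l^n the condition in part (b) says that
   every divisor m > 1 of n is a multiple of c.  Part (b) then reduces to an
   elementary fact about natural numbers: for a prime p, a positive n is a
   positive power of p iff p | n and p divides every divisor m > 1 of n. *)

Lemma expr_sub1_expansion (S : comNzRingType) (l : S) (n : nat) :
  exists q : S, l ^+ n - 1 = (l - 1) * (n%:R + (l - 1) * q).
Proof.
elim: n => [|n [q IH]]; first by exists 0; rewrite expr0; ring.
exists (n%:R + l * q); rewrite exprS.
have -> : l ^+ n = 1 + (l - 1) * (n%:R + (l - 1) * q) by rewrite -IH; ring.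
rewrite -addn1 natrD; ring.
Qed.

Lemma natr_eq0_char (S : comNzRingType) (c n : nat) :
  has_pos_char S c -> (n%:R : S) = 0 <-> (c %| n)%N.
Proof.
move=> [c_gt0 [c_eq0 c_min]]; split; last first.
  by move=> /dvdnP [k ->]; rewrite natrM c_eq0 mulr0.
rewrite {1}(divn_eq n c) natrD natrM c_eq0 mulr0 add0r => mod_eq0.
case: (posnP (n %% c)) => [mod0|mod_gt0]; first by rewrite /dvdn mod0.
by have := c_min _ mod_gt0 mod_eq0; rewrite leqNgt ltn_mod c_gt0.
Qed.

Lemma prime_power_iff_divisors (p n : nat) : prime p -> (0 < n)%N ->
  (exists k, 1 <= k /\ n = p ^ k)%N <->
  (p %| n /\ forall m, 1 < m -> m %| n -> p %| m)%N.
Proof.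
move=> p_pr n_gt0; split.
  move=> [k [k_ge1 ->]]; split; first by rewrite dvdn_exp.
  move=> m m_gt1 /(dvdn_pfactor _ _ p_pr) [[|j] _ m_eq]; rewrite m_eq.
    by rewrite m_eq in m_gt1.
  by rewrite dvdn_exp.
move=> [p_dvd_n p_dvd_divisors].
have [r p_coprime_r n_eq] := pfactor_coprime p_pr n_gt0.
have r_eq1 : r = 1%N.
  have r_gt0 : (0 < r)%N by move: n_gt0; rewrite n_eq muln_gt0 => /andP[].
  case: (ltngtP r 1) => [|r_gt1|] //; first by rewrite ltnNge r_gt0.
  have p_dvd_r : (p %| r)%N by apply: p_dvd_divisors; rewrite // n_eq dvdn_mulr.
  have : (p %| gcdn p r)%N by rewrite dvdn_gcd dvdnn p_dvd_r.
  by rewrite (eqP p_coprime_r) dvdn1 => /eqP p1; rewrite p1 in p_pr.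
exists (logn p n); split; last by rewrite {1}n_eq r_eq1 mul1n.
by rewrite logn_gt0 mem_primes p_pr n_gt0.
Qed.

Section PowersOfL.

Variables (S : comNzRingType) (c : nat) (l : S).
Hypothesis hchar : has_pos_char S c.
Hypothesis hreg : regularS (l - 1).
Hypothesis hdiv : forall m n : nat, (0 < m)%N -> (0 < n)%N ->
  (dvdS (l ^+ m - 1) (l ^+ n - 1) <-> (m %| n)%N).
Hypothesis hint : forall n : int, dvdS (l - 1) (n%:~R : S) -> (n%:~R : S) = 0.

Lemma sqr_dvd_expr_sub1 (n : nat) :
  dvdS ((l - 1) ^+ 2) (l ^+ n - 1) <-> (c %| n)%N.
Proof.
have [q hq] := expr_sub1_expansion _ l n.
rewrite -(natr_eq0_char _ _ n hchar); split => [[x hx]|n_eq0].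
  (* cancelling one factor l - 1 shows that l - 1 divides n in S *)
  have n_mul : n%:R + (l - 1) * q = (l - 1) * x.
    by apply: hreg; rewrite -hq hx expr2 mulrA.
  apply: (hint n%:Z); exists (x - q).
  by rewrite mulrBr -n_mul; change ((n%:Z)%:~R) with (n%:R : S); ring.
by exists q; rewrite hq n_eq0 add0r expr2 mulrA.
Qed.

Lemma expr_inj (m n : nat) : (0 < m)%N -> (0 < n)%N -> l ^+ m = l ^+ n -> m = n.
Proof.
move=> m_gt0 n_gt0 e; apply/eqP; rewrite eqn_dvd.
by apply/andP; split; [apply/(hdiv _ _ m_gt0 n_gt0)|apply/(hdiv _ _ n_gt0 m_gt0)];
  rewrite e; exists 1; rewrite mulr1.
Qed.

Lemma MPOW_expr (n : nat) : (0 < n)%N -> MPOW c l (l ^+ n) <-> (c %| n)%N.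
Proof.
move=> n_gt0; split; last by exists n.
by move=> [m [m_gt0 [c_dvd_m e]]]; rewrite (expr_inj _ _ n_gt0 m_gt0 e).
Qed.

Lemma PPOW_expr (n : nat) : (0 < n)%N ->
  PPOW c l (l ^+ n) <-> exists k, (1 <= k)%N /\ n = (c ^ k)%N.
Proof.
have c_gt0 : (0 < c)%N by case: hchar.
move=> n_gt0; split; last by move=> [k [k_ge1 ->]]; exists k.
move=> [k [k_ge1 e]]; exists k; split => //.
by apply: expr_inj; rewrite // expn_gt0 c_gt0.
Qed.

Lemma MPOW_divisors_expr (n : nat) : (0 < n)%N ->
  (forall y' : S, POW l y' -> y' <> l -> dvdS (y' - 1) (l ^+ n - 1) -> MPOW c l y')
  <-> (forall m, (1 < m)%N -> (m %| n)%N -> (c %| m)%N).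
Proof.
move=> n_gt0; split.
  move=> hy m m_gt1 m_dvd_n; have m_gt0 := ltnW m_gt1.
  apply/(MPOW_expr _ m_gt0); apply: hy; first by exists m.
    by move=> /(expr_inj _ 1 m_gt0 isT) m1; rewrite m1 in m_gt1.
  exact/(hdiv _ _ m_gt0 n_gt0).
move=> hm _ [m [m_gt0 ->]] ne /(hdiv _ _ m_gt0 n_gt0) m_dvd_n.
apply/(MPOW_expr _ m_gt0)/hm => //.
by rewrite ltn_neqAle eq_sym m_gt0 andbT; apply: contra_notN ne => /eqP ->.
Qed.

End PowersOfL.

Theorem lemma2p1 (S : comNzRingType) (c : nat) (l : S)
  (hchar : has_pos_char S c)
  (hreg : regularS (l - 1))
  (hdiv : forall m n : nat, (0 < m)%N -> (0 < n)%N ->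
            (dvdS (l ^+ m - 1) (l ^+ n - 1) <-> (m %| n)%N))
  (hint : forall n : int, dvdS (l - 1) (n%:~R : S) -> (n%:~R : S) = 0) :
  forall y : S,
    (MPOW c l y <-> (POW l y /\ dvdS ((l - 1) ^+ 2) (y - 1))) /\
    (prime c ->
      (PPOW c l y <->
        (MPOW c l y /\
         forall y' : S, POW l y' -> y' <> l -> dvdS (y' - 1) (y - 1) -> MPOW c l y'))).
Proof.
move=> y.
have sqr_dvd := sqr_dvd_expr_sub1 _ _ _ hchar hreg hint.
have MPOW_pow := MPOW_expr _ c _ hdiv.
have PPOW_pow := PPOW_expr _ _ _ hchar hdiv.
have divisors_pow := MPOW_divisors_expr _ c _ hdiv.
split.
  split; first by move=> [n [n_gt0 [c_dvd_n ->]]]; split; [exists n|apply/sqr_dvd].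
  by move=> [[n [n_gt0 ->]] /sqr_dvd c_dvd_n]; exists n.
move=> c_pr; split.
  move=> [k [k_ge1 ->]]; have ck_gt0 : (0 < c ^ k)%N by rewrite expn_gt0 prime_gt0.
  have [c_dvd_ck ck_divisors] : (c %| c ^ k /\
      forall m, 1 < m -> m %| c ^ k -> c %| m)%N.
    by apply/(prime_power_iff_divisors _ _ c_pr ck_gt0); exists k.
  by split; [apply/MPOW_pow|apply/divisors_pow].
move=> [[n [n_gt0 [c_dvd_n ->]]] /(divisors_pow _ n_gt0) n_divisors].
by apply/(PPOW_pow _ n_gt0)/(prime_power_iff_divisors _ _ c_pr n_gt0).
Qed.
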